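(* Let $T=\{t_1,\ldots,t_N\}$ be documents, each containing at most $L$ distinct words from a dictionary $\{w_1,\ldots,w_D\}$ ($D\ge 2$). For a word $w$ let $\#(w)$ be the number of documents containing $w$ and for words $x,y$ let $\#(x,y)$ be the number of documents containing both. Fix $\epsilon\in(0,1]$ and $p=2\log D$. Consider the MapReduce mapper that, for every document $t$ and every unordered pair of distinct words $(w_i,w_j)$ in $t$, independently emits the key-value pair $((w_i,w_j)\to 1)$ with probability $\min\!\left(1,\frac{p}{\epsilon}\frac{1}{\sqrt{\#(w_i)}\sqrt{\#(w_j)}}\right)$ (CosineSampleEmit). Then the expected total number of emitted pairs (the shuffle size) is at most $\frac{p}{\epsilon}LD=O(DL\log(D)/\epsilon)$, independently of $N$. Moreover, this is tight up to the factor $\log(D)/\epsilon$: whenever $L\ge 2$ divides $D$, there is an input of this form with at least $(D/L)\binom{L}{2}=\Omega(DL)$ pairs of words having cosine similarity $1\ge\epsilon$, so any algorithm that outputs all pairs with cosine similarity at least $\epsilon$ (in particular a shuffle of CosineSampleEmit from which these are computed) must produce $\Omega(DL)$ output in the worst case.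
   Context: Cosine similarity of words $x,y$ is $\frac{\#(x,y)}{\sqrt{\#(x)}\sqrt{\#(y)}}$. The shuffle size is the total number of key-value pairs emitted by the mappers over all documents. $\log$ denotes the natural logarithm. *)

From HB Require Import structures.
From mathcomp Require Import all_boot all_order all_algebra.
From mathcomp Require Import reals exp.
Set Implicit Arguments. Unset Strict Implicit. Unset Printing Implicit Defensive.
Import Order.TTheory GRing.Theory Num.Theory.
Local Open Scope ring_scope.

(* Words are w_1..w_D, represented by 'I_D.  A corpus of N documents is a
   map docs : 'I_N -> {set 'I_D} (each document = its set of distinct words). *)

Definition cnt (D N : nat) (docs : 'I_N -> {set 'I_D}) (w : 'I_D) : nat :=
  #|[set k : 'I_N | w \in docs k]|.

Definition cnt2 (D N : nat) (docs : 'I_N -> {set 'I_D}) (x y : 'I_D) : nat :=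
  #|[set k : 'I_N | (x \in docs k) && (y \in docs k)]|.

Definition cosine (R : realType) (D N : nat) (docs : 'I_N -> {set 'I_D})
  (x y : 'I_D) : R :=
  (cnt2 docs x y)%:R / (Num.sqrt (cnt docs x)%:R * Num.sqrt (cnt docs y)%:R).

Definition emit_prob (R : realType) (D N : nat) (docs : 'I_N -> {set 'I_D})
  (p eps : R) (i j : 'I_D) : R :=
  Num.min 1 ((p / eps) / (Num.sqrt (cnt docs i)%:R * Num.sqrt (cnt docs j)%:R)).

(* Expected shuffle size: the total number of emitted key-value pairs is a sum
   of independent Bernoulli indicators, one per (document, unordered pair of
   distinct words in it); its expectation is the sum of emission
   probabilities.  Unordered pairs {w_i,w_j} are enumerated as i < j. *)
Definition expected_shuffle (R : realType) (D N : nat)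
  (docs : 'I_N -> {set 'I_D}) (p eps : R) : R :=
  \sum_(k < N) \sum_(i : 'I_D) \sum_(j : 'I_D |
      [&& (i < j)%N, i \in docs k & j \in docs k]) emit_prob docs p eps i j.

From HB Require Import structures.
From mathcomp Require Import all_boot all_order all_algebra.
From mathcomp Require Import reals exp.
From mathcomp Require Import zify ring lra.
Set Implicit Arguments. Unset Strict Implicit. Unset Printing Implicit Defensive.
Import Order.TTheory GRing.Theory Num.Theory.
Local Open Scope ring_scope.

(* Upper bound: by AM-GM the emission probability of a pair {i, j} in a
   document is at most (p/eps) (1/#(i) + 1/#(j)) / 2.  Summing over the at
   most L^2 ordered pairs of a document charges each word i of the document
   at most L (p/eps) / #(i); since i lies in exactly #(i) documents, the total
   charge of i is at most L p/eps, and there are D words.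
   Lower bound: split the dictionary into D/L blocks of L consecutive words
   and take the blocks as documents; two words of the same block occur
   exactly once each and once together, so their cosine similarity is 1. *)

Lemma inv_sqrt_mul_le_mean (R : rcfType) (x y : R) : 0 < x -> 0 < y ->
  (Num.sqrt x * Num.sqrt y)^-1 <= (x^-1 + y^-1) / 2.
Proof.
move=> /ltW x_ge0 /ltW y_ge0.
rewrite -{2}(sqr_sqrtr x_ge0) -{2}(sqr_sqrtr y_ge0) invfM -!exprVn.
have : 0 <= ((Num.sqrt x)^-1 - (Num.sqrt y)^-1) ^+ 2 by apply: sqr_ge0.
nra.
Qed.

Lemma sum_lt_pairs_le_sum (R : numDomainType) (n : nat) (A : {set 'I_n})
    (h : 'I_n -> 'I_n -> R) :
  (forall i j, i \in A -> j \in A -> 0 <= h i j) ->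
  \sum_(i : 'I_n) \sum_(j : 'I_n | [&& (i < j)%N, i \in A & j \in A]) h i j
    <= \sum_(i in A) \sum_(j in A) h i j.
Proof.
move=> h_ge0; rewrite [X in _ <= X]big_mkcond /=; apply: ler_sum => i _.
case: ifP => iA; last by rewrite big_pred0 // => j; rewrite andbF.
rewrite [X in _ <= X]big_mkcond [X in X <= _]big_mkcond /=.
apply: ler_sum => j _.
by case: (i < j)%N; case: ifP => //= jA; apply: h_ge0.
Qed.

Lemma sum_sum_mean (R : numFieldType) (T : finType) (A : {set T}) (g : T -> R) :
  \sum_(i in A) \sum_(j in A) (g i + g j) / 2 = #|A|%:R * \sum_(i in A) g i.
Proof.
have sum_gi : \sum_(i in A) \sum_(j in A) g i = #|A|%:R * \sum_(i in A) g i.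
  by rewrite mulr_sumr; apply: eq_bigr => i _; rewrite sumr_const mulr_natl.
under eq_bigr do rewrite -mulr_suml big_split /=.
rewrite -mulr_suml big_split /= [X in _ + X]exchange_big /= sum_gi.
by field.
Qed.

Section ShuffleUpperBound.
Variables (R : realType) (D N : nat) (docs : 'I_N -> {set 'I_D}).

Let inv_cnt (i : 'I_D) : R := (cnt docs i)%:R^-1.

Lemma cnt_gt0 k i : i \in docs k -> (0 < cnt docs i)%N.
Proof. by move=> ik; apply/card_gt0P; exists k; rewrite inE. Qed.

Lemma emit_prob_le_mean (p eps : R) k i j : 0 <= p / eps ->
    i \in docs k -> j \in docs k ->
  emit_prob docs p eps i j <= p / eps * ((inv_cnt i + inv_cnt j) / 2).
Proof.
move=> p_eps_ge0 ik jk; rewrite /emit_prob ge_min; apply/orP; right.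
apply: ler_wpM2l => //; apply: inv_sqrt_mul_le_mean; rewrite ltr0n.
  exact: cnt_gt0 ik.
exact: cnt_gt0 jk.
Qed.

Lemma sum_emit_prob_doc_le (L : nat) (p eps : R) k :
    0 <= p / eps -> (#|docs k| <= L)%N ->
  \sum_(i : 'I_D) \sum_(j : 'I_D | [&& (i < j)%N, i \in docs k & j \in docs k])
     emit_prob docs p eps i j
    <= p / eps * L%:R * \sum_(i in docs k) inv_cnt i.
Proof.
move=> p_eps_ge0 docL.
have inv_cnt_ge0 i : 0 <= inv_cnt i by rewrite invr_ge0.
have sum_ge0 : 0 <= \sum_(i in docs k) inv_cnt i by apply: sumr_ge0.
pose bound i j := p / eps * ((inv_cnt i + inv_cnt j) / 2).
apply: (@le_trans _ _ (\sum_(i : 'I_D)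
    \sum_(j : 'I_D | [&& (i < j)%N, i \in docs k & j \in docs k]) bound i j)).
  apply: ler_sum => i _; apply: ler_sum => j /and3P[_ ik jk].
  exact: emit_prob_le_mean p_eps_ge0 ik jk.
apply: le_trans (sum_lt_pairs_le_sum (h := bound) _) _.
  by move=> i j _ _; rewrite mulr_ge0 // divr_ge0 ?addr_ge0.
rewrite /bound; under eq_bigr do rewrite -mulr_sumr.
rewrite -mulr_sumr sum_sum_mean mulrA.
by apply: ler_wpM2r => //; apply: ler_wpM2l => //; rewrite ler_nat.
Qed.

Lemma sum_doc_inv_cnt_le : \sum_(k < N) \sum_(i in docs k) inv_cnt i <= D%:R.
Proof.
rewrite (exchange_big_dep xpredT) //=.
rewrite -[X in _ <= X]mulr1n -[in X in _ <= X](card_ord D) -sumr_const.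
apply: ler_sum => i _; rewrite sumr_const.
have -> : #|[pred k : 'I_N | i \in docs k]| = cnt docs i.
  by apply: eq_card => k; rewrite inE.
case: (posnP (cnt docs i)) => [-> | cnt_i_gt0]; first by rewrite mulr0n.
by rewrite -mulr_natr mulVf // pnatr_eq0 -lt0n.
Qed.

Lemma expected_shuffle_le (L : nat) (p eps : R) :
    0 <= p -> 0 < eps -> (forall k, (#|docs k| <= L)%N) ->
  expected_shuffle docs p eps <= p / eps * L%:R * D%:R.
Proof.
move=> p_ge0 eps_gt0 docL.
have p_eps_ge0 : 0 <= p / eps by rewrite divr_ge0 // ltW.
apply: le_trans (ler_sum _ (fun k _ => sum_emit_prob_doc_le p_eps_ge0 (docL k))) _.
rewrite -mulr_sumr; apply: ler_wpM2l; last exact: sum_doc_inv_cnt_le.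
by rewrite mulr_ge0.
Qed.

End ShuffleUpperBound.

Lemma card_ord_lt_pairs (n : nat) :
  #|[set pr : 'I_n * 'I_n | (pr.1 < pr.2)%N]| = 'C(n, 2).
Proof.
rewrite -sum1_card.
rewrite (eq_bigl (fun pr : 'I_n * 'I_n => (pr.1 < pr.2)%N)); last first.
  by move=> pr; rewrite inE.
rewrite -(pair_big_dep xpredT (fun a b : 'I_n => (a < b)%N) (fun _ _ => 1%N)) /=.
rewrite (exchange_big_dep xpredT) //= -bin2_sum big_mkord; apply: eq_bigr => b _.
rewrite big_mkcond /= -(big_mkord xpredT (fun a => if (a < b)%N then 1%N else 0%N)).
rewrite (big_cat_nat _ (n := b)) //=; last exact: ltnW.
rewrite big_nat_cond (eq_bigr (fun _ => 1%N)); last by move=> i /andP[/andP[_ ->]].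
rewrite -big_nat_cond sum_nat_const_nat muln1 subn0.
by rewrite big_nat_cond big1 ?addn0 // => i /andP[/andP[bi _] _]; rewrite ltnNge bi.
Qed.

Section BlockCorpus.
Variables (R : realType) (D L : nat).
Hypotheses (L_gt0 : (0 < L)%N) (L_dvd_D : (L %| D)%N).

Let m := (D %/ L)%N.

Lemma block_word_lt (q : 'I_m) (a : 'I_L) : (q * L + a < D)%N.
Proof.
rewrite -(divnK L_dvd_D) -/m.
by have := ltn_ord q; have := ltn_ord a; nia.
Qed.

Definition block_word (q : 'I_m) (a : 'I_L) : 'I_D := Ordinal (block_word_lt q a).

Lemma block_word_div q a : (block_word q a %/ L = q)%N.
Proof. by rewrite /= divnMDl // divn_small ?addn0. Qed.

Lemma block_word_mod q a : (block_word q a %% L = a)%N.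
Proof. by rewrite /= modnMDl modn_small. Qed.

Lemma block_word_inj q a q' a' :
  block_word q a = block_word q' a' -> q = q' /\ a = a'.
Proof.
move=> e; split; apply: val_inj.
  by rewrite /= -(block_word_div q a) e block_word_div.
by rewrite /= -(block_word_mod q a) e block_word_mod.
Qed.

Definition block_docs (k : 'I_m) : {set 'I_D} := [set w : 'I_D | (w %/ L == k)%N].

Lemma card_block_docs k : (#|block_docs k| <= L)%N.
Proof.
rewrite -[X in (_ <= X)%N]card_ord.
apply: (@leq_card_in _ _ (fun w : 'I_D => Ordinal (ltn_pmod w L_gt0))).
move=> x y; rewrite !inE => /eqP x_k /eqP y_k [] xy_mod.
by apply: val_inj; rewrite /= (divn_eq x L) (divn_eq y L) x_k y_k xy_mod.
Qed.

Lemma block_of_lt (x : 'I_D) : (x %/ L < m)%N.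
Proof. by rewrite ltn_divLR // divnK. Qed.

Lemma cnt2_block_docs (x y : 'I_D) :
  (x %/ L = y %/ L)%N -> cnt2 block_docs x y = 1%N.
Proof.
move=> xy_block; rewrite /cnt2 -(cards1 (Ordinal (block_of_lt x))).
by apply: eq_card => k; rewrite !inE -xy_block andbb -val_eqE /= eq_sym.
Qed.

Lemma cnt_block_docs (x : 'I_D) : cnt block_docs x = 1%N.
Proof.
rewrite -(@cnt2_block_docs x x) //.
by apply: eq_card => k; rewrite !inE andbb.
Qed.

Lemma cosine_block_docs (x y : 'I_D) :
  (x %/ L = y %/ L)%N -> cosine R block_docs x y = 1.
Proof.
move=> xy_block.
by rewrite /cosine cnt2_block_docs // !cnt_block_docs sqrtr1 mulr1 divr1.
Qed.

Lemma block_docs_similar_pairs :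
  (m * 'C(L, 2) <= #|[set pr : 'I_D * 'I_D | (pr.1 < pr.2)%N &
                       cosine R block_docs pr.1 pr.2 == 1%R]|)%N.
Proof.
pose f (t : 'I_m * ('I_L * 'I_L)) := (block_word t.1 t.2.1, block_word t.1 t.2.2).
pose lt_pairs := [set pr : 'I_L * 'I_L | (pr.1 < pr.2)%N].
have -> : (m * 'C(L, 2) = #|setX [set: 'I_m] lt_pairs|)%N.
  by rewrite cardsX cardsT card_ord card_ord_lt_pairs.
rewrite -(card_in_imset (f := f)); last first.
  move=> [q [a b]] [q' [a' b']] _ _ /eqP; rewrite /f /= xpair_eqE.
  by case/andP=> /eqP/block_word_inj[-> ->] /eqP/block_word_inj[_ ->].
apply/subset_leq_card/subsetP => pr /imsetP [[q [a b]]].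
rewrite !inE /= => ab ->; rewrite /= cosine_block_docs ?eqxx ?andbT ?ltn_add2l //.
by rewrite !block_word_div.
Qed.

End BlockCorpus.

Theorem theorem2 (R : realType) (D L : nat) :
  (2 <= D)%N ->
  (forall (N : nat) (docs : 'I_N -> {set 'I_D}) (eps : R),
      (forall k, (#|docs k| <= L)%N) ->
      0 < eps -> eps <= 1 ->
      expected_shuffle docs (2 * ln (D%:R : R)) eps
        <= (2 * ln (D%:R : R)) / eps * L%:R * D%:R)
  /\
  ((2 <= L)%N -> (L %| D)%N ->
    exists (N : nat) (docs : 'I_N -> {set 'I_D}),
      (forall k, (#|docs k| <= L)%N) /\
      (D %/ L * 'C(L, 2) <=
         #|[set pr : 'I_D * 'I_D | (pr.1 < pr.2)%N &
              cosine R docs pr.1 pr.2 == 1%R]|)%N).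
Proof.
move=> D_ge2; split.
  move=> N docs eps docL eps_gt0 _; apply: expected_shuffle_le => //.
  by rewrite mulr_ge0 // ln_ge0 // ler1n ltnW.
move=> L_ge2 L_dvd_D; have L_gt0 : (0 < L)%N by apply: ltnW.
exists (D %/ L)%N, (@block_docs D L); split.
  exact: card_block_docs.
exact: block_docs_similar_pairs.
Qed.
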